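(* Let $\beta\in\mathbb{C}$ and $N\geq2$ with $\beta^N=1$ and $\beta^k\neq1$ for $k=1,\dots,N-1$. Let $m\in\mathrm{Hol}(\mathbb{D})$, $m\not\equiv0$, and $T:\mathrm{Hol}(\mathbb{D})\to\mathrm{Hol}(\mathbb{D})$ given by $(Tf)(z)=m(z)f(\beta z)$. If $m(z_0)=0$ for some $z_0\in\mathbb{D}$, then $\sigma_p(T)=\emptyset$.
   Context: $\mathbb{D}$ is the open unit disc, $\mathrm{Hol}(\mathbb{D})$ the space of holomorphic functions on $\mathbb{D}$. $\sigma_p(T)$ is the set of $\lambda\in\mathbb{C}$ such that $\lambda\mathrm{Id}-T$ is not injective. *)

From Stdlib Require Import Reals.
From Coquelicot Require Import Coquelicot.
Open Scope C_scope.

Definition in_disc (z : C) : Prop := (Cmod z < 1)%R.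

(* Elements of Hol(D) are represented by functions C -> C; values outside
   D are irrelevant (two functions are equal in Hol(D) iff they agree on D). *)
Definition holomorphic_on_disc (f : C -> C) : Prop :=
  forall z : C, in_disc z -> @ex_derive C_AbsRing C_NormedModule f z.

Definition zero_on_disc (f : C -> C) : Prop :=
  forall z : C, in_disc z -> f z = 0.

Definition Top (m : C -> C) (beta : C) (f : C -> C) : C -> C :=
  fun z => m z * f (beta * z).

Definition in_point_spectrum (m : C -> C) (beta : C) (lambda : C) : Prop :=
  exists f : C -> C,
    holomorphic_on_disc f /\ ~ zero_on_disc f /\
    zero_on_disc (fun z => lambda * f z - Top m beta f z).

(* If lambda <> 0, iterating lambda f = m f(beta .) N times and using beta^N = 1 gives
   (lambda^N - m(z) m(beta z) ... m(beta^(N-1) z)) f(z) = 0 on the disc, and the bracket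
   does not vanish near z0, so f vanishes near z0.  If lambda = 0, then m(z) f(beta z) = 0,
   so f(beta .) vanishes near any point where m does not.  Either way the identity theorem
   gives f = 0.

   The identity theorem is proved from Goursat's theorem for rectangles.  Let f vanish near
   the centre a of a square of half-side s and let |z - a| < s.  The integrals
   I_n = \oint f(w) (c / (w - a))^n dw / (w - z), with c = z - a, do not depend on n and are
   O((|c| / s)^n), so I_0 = 0; by Cauchy's formula I_0 = f(z) \oint dw / (w - z), and the
   last integral is nonzero.  Chaining such squares along a segment spreads the zeros of f
   over the whole disc. *)

From Stdlib Require Import Reals Lra Psatz Classical.
From Coquelicot Require Import Coquelicot.
Open Scope C_scope.

Lemma Cmod_sub_comm (a b : C) : Cmod (a - b) = Cmod (b - a).
Proof. replace (a - b) with (- (b - a)) by ring. apply Cmod_opp. Qed.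

Lemma Cmod_sub_ge (a b : C) : (Cmod a - Cmod b <= Cmod (a - b))%R.
Proof.
  pose proof (Cmod_triangle (a - b) b) as H.
  replace (a - b + b) with a in H by ring. lra.
Qed.

Lemma Cmod_pair_le (x y : R) : (Cmod (x, y) <= Rabs x + Rabs y)%R.
Proof.
  replace (x, y) with ((x, 0%R) + (0%R, y)) by (apply injective_projections; simpl; ring).
  eapply Rle_trans; [apply Cmod_triangle|].
  unfold Cmod; simpl; rewrite <- !sqrt_Rsqr_abs; unfold Rsqr.
  apply Rplus_le_compat; right; f_equal; ring.
Qed.

Lemma Cmod_pair_sub_le (x y px py : R) : (Cmod ((x, y) - (px, py)) <= Rabs (x - px) + Rabs (y - py))%R.
Proof.
  replace ((x, y) - (px, py)) with ((x - px)%R, (y - py)%R) by (apply injective_projections; simpl; ring).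
  apply Cmod_pair_le.
Qed.

Lemma Rabs_Im_le_Cmod (z : C) : (Rabs (Im z) <= Cmod z)%R.
Proof.
  destruct z as [x y]; unfold Cmod; simpl.
  rewrite <- sqrt_Rsqr_abs. apply sqrt_le_1_alt. unfold Rsqr. nra.
Qed.

Lemma Cminus_neq_0 (a b : C) : a <> b -> a - b <> 0.
Proof. intros Hab E. apply Hab. replace a with (a - b + b) by ring. rewrite E. ring. Qed.

Lemma Cminus_eq_0 (a b : C) : a - b = 0 -> a = b.
Proof. intros H. replace a with (a - b + b) by ring. rewrite H. ring. Qed.

Lemma Cmod_sub_pos (a b : C) : a <> b -> (0 < Cmod (a - b))%R.
Proof. intros Hab. apply Cmod_gt_0, Cminus_neq_0, Hab. Qed.

Lemma Ceq_dec (x y : C) : {x = y} + {x <> y}.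
Proof. decide equality; apply Req_EM_T. Defined.

Lemma pow2_plus_pow2_pos (a b : R) : b <> 0%R -> (0 < a ^ 2 + b ^ 2)%R.
Proof.
  intros Hb. pose proof (pow2_ge_0 a). pose proof (Rlt_0_sqr b Hb). unfold Rsqr in *. simpl. lra.
Qed.

Lemma eq_0_of_Cmod_le_eps (z : C) (K : R) : (forall eps, (0 < eps)%R -> (Cmod z <= eps * K)%R) -> z = 0.
Proof.
  intros H. apply Cmod_eq_0, Rle_antisym; [|apply Cmod_ge_0].
  apply le_epsilon. intros eps Heps.
  assert (HK : (0 < Rabs K + 1)%R) by (pose proof (Rabs_pos K); lra).
  specialize (H (eps / (Rabs K + 1))%R (Rdiv_lt_0_compat _ _ Heps HK)).
  assert (eps / (Rabs K + 1) * K <= eps)%R.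
  { apply (Rmult_le_reg_r (Rabs K + 1)); [exact HK|].
    unfold Rdiv. replace (eps * / (Rabs K + 1) * K * (Rabs K + 1))%R with (eps * K)%R by (field; lra).
    pose proof (Rle_abs K). nra. }
  lra.
Qed.

Lemma eq_0_of_Cmod_le_geometric (z : C) (K q : R) : (0 <= q < 1)%R ->
  (forall n, (Cmod z <= K * q ^ n)%R) -> z = 0.
Proof.
  intros Hq H. apply (eq_0_of_Cmod_le_eps _ (Rabs K)). intros eps Heps.
  destruct (pow_lt_1_zero q ltac:(rewrite Rabs_right; lra) eps Heps) as [n Hn].
  specialize (Hn n (Nat.le_refl n)). rewrite Rabs_right in Hn by (apply Rle_ge, pow_le; lra).
  eapply Rle_trans; [apply (H n)|].
  pose proof (pow_le q n ltac:(lra)).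
  rewrite (Rmult_comm eps). apply Rle_trans with (Rabs K * q ^ n)%R.
  - apply Rmult_le_compat_r; [assumption | apply Rle_abs].
  - apply Rmult_le_compat_l; [apply Rabs_pos | lra].
Qed.

(** * Complex differentiability *)

Definition is_cderiv (g : C -> C) (z l : C) : Prop :=
  forall eps, (0 < eps)%R -> exists d, (0 < d)%R /\ forall w, (Cmod (w - z) < d)%R ->
    (Cmod (g w - g z - l * (w - z)) <= eps * Cmod (w - z))%R.

Definition cdiff (g : C -> C) (z : C) : Prop := exists l, is_cderiv g z l.

Definition ccont (g : C -> C) (z : C) : Prop :=
  forall eps, (0 < eps)%R -> exists d, (0 < d)%R /\ forall w, (Cmod (w - z) < d)%R ->
    (Cmod (g w - g z) < eps)%R.

(* Coquelicot's product rule is stated in [AbsRing_NormedModule C_AbsRing], whereas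
   [holomorphic_on_disc] uses [C_NormedModule]; both carry the same norm on [C]. *)
Notation is_Cderive := (@is_derive C_AbsRing (AbsRing_NormedModule C_AbsRing)).

Lemma is_derive_iff_is_cderiv (g : C -> C) (z l : C) : is_Cderive g z l <-> is_cderiv g z l.
Proof.
  assert (Hdiff : forall w, g w - g z - l * (w - z) = minus (minus (g w) (g z)) (scal (minus w z) l)).
  { intros w. unfold minus, plus, opp, scal; simpl. unfold mult; simpl. ring. }
  split.
  - intros [_ H] eps Heps.
    destruct (H z (fun P HP => HP) (mkposreal eps Heps)) as [d Hd].
    exists d. split; [apply cond_pos|]. intros w Hw.
    rewrite Hdiff. exact (Hd w Hw).
  - intros H. split; [apply is_linear_scal_l|].
    intros x Hx.
    apply (is_filter_lim_locally_unique (K := C_AbsRing) (V := AbsRing_NormedModule C_AbsRing)) in Hx.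
    subst x.
    intros eps. destruct (H eps (cond_pos eps)) as [d [Hd Hw]].
    exists (mkposreal d Hd). intros w Hb.
    change (Cmod (minus (minus (g w) (g z)) (scal (minus w z) l)) <= eps * Cmod (minus w z))%R.
    rewrite <- Hdiff. exact (Hw w Hb).
Qed.

Lemma cdiff_ex_derive (g : C -> C) (z : C) : cdiff g z <-> ex_derive (V := AbsRing_NormedModule C_AbsRing) g z.
Proof.
  split; intros [l Hl]; exists l; apply is_derive_iff_is_cderiv; exact Hl.
Qed.

Lemma holomorphic_on_disc_cdiff (g : C -> C) (z : C) :
  holomorphic_on_disc g -> in_disc z -> cdiff g z.
Proof.
  intros Hg Hz. apply cdiff_ex_derive.
  destruct (Hg z Hz) as [l [_ Hl]]. exists l.
  split; [apply is_linear_scal_l|]. intros x Hx eps. exact (Hl x Hx eps).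
Qed.

Lemma cdiff_const (c z : C) : cdiff (fun _ => c) z.
Proof. apply cdiff_ex_derive. eexists. apply is_derive_const. Qed.

Lemma cdiff_id (z : C) : cdiff (fun w => w) z.
Proof. apply cdiff_ex_derive. eexists. apply is_derive_id. Qed.

Lemma cdiff_plus (f g : C -> C) (z : C) :
  cdiff f z -> cdiff g z -> cdiff (fun w => f w + g w) z.
Proof.
  rewrite !cdiff_ex_derive. intros [a Ha] [b Hb]. eexists.
  exact (is_derive_plus (V := AbsRing_NormedModule C_AbsRing) f g z a b Ha Hb).
Qed.

Lemma cdiff_minus (f g : C -> C) (z : C) :
  cdiff f z -> cdiff g z -> cdiff (fun w => f w - g w) z.
Proof.
  rewrite !cdiff_ex_derive. intros [a Ha] [b Hb]. eexists.
  exact (is_derive_minus (V := AbsRing_NormedModule C_AbsRing) f g z a b Ha Hb).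
Qed.

Lemma cdiff_mult (f g : C -> C) (z : C) :
  cdiff f z -> cdiff g z -> cdiff (fun w => f w * g w) z.
Proof.
  rewrite !cdiff_ex_derive. intros [a Ha] [b Hb]. eexists.
  exact (is_derive_mult f g z a b Ha Hb Cmult_comm).
Qed.

Lemma cdiff_pow (g : C -> C) (z : C) (n : nat) : cdiff g z -> cdiff (fun w => g w ^ n) z.
Proof.
  intros Hg. induction n as [|n IH]; simpl.
  - apply cdiff_const.
  - apply cdiff_mult; assumption.
Qed.

Lemma cdiff_comp_scale (g : C -> C) (c z : C) : cdiff g (c * z) -> cdiff (fun w => g (c * w)) z.
Proof.
  intros Hg.
  assert (Hc : cdiff (fun w => c * w) z) by (apply cdiff_mult; [apply cdiff_const | apply cdiff_id]).
  rewrite cdiff_ex_derive in Hg, Hc |- *. destruct Hg as [a Ha], Hc as [b Hb].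
  eexists. exact (is_derive_comp (V := AbsRing_NormedModule C_AbsRing) g (fun w => c * w) z a b Ha Hb).
Qed.

Lemma cdiff_ext_loc (f g : C -> C) (z : C) (r : R) : (0 < r)%R ->
  (forall w, (Cmod (w - z) < r)%R -> f w = g w) -> cdiff f z -> cdiff g z.
Proof.
  intros Hr Hfg. rewrite !cdiff_ex_derive. intros [l Hl]. exists l.
  apply (is_derive_ext_loc (V := AbsRing_NormedModule C_AbsRing) f g z l); [|exact Hl].
  exists (mkposreal r Hr). intros w Hw. apply Hfg, Hw.
Qed.

Lemma ccont_of_cdiff (g : C -> C) (z : C) : cdiff g z -> ccont g z.
Proof.
  intros [l Hl] eps Heps.
  destruct (Hl 1%R Rlt_0_1) as [d [Hd H]].
  pose proof (Cmod_ge_0 l) as Hl0.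
  exists (Rmin d (eps / (Cmod l + 2))). split.
  { apply Rmin_pos; [lra|]. apply Rdiv_lt_0_compat; lra. }
  intros w Hw.
  assert (Hwd : (Cmod (w - z) < d)%R) by (eapply Rlt_le_trans; [apply Hw | apply Rmin_l]).
  assert (Hwe : (Cmod (w - z) * (Cmod l + 2) < eps)%R).
  { apply (Rmult_lt_compat_r (Cmod l + 2)) in Hw; [|lra].
    eapply Rlt_le_trans; [exact Hw|]. unfold Rdiv.
    rewrite Rmult_min_distr_r by lra. eapply Rle_trans; [apply Rmin_r|].
    right. field. lra. }
  specialize (H w Hwd).
  replace (g w - g z) with ((g w - g z - l * (w - z)) + l * (w - z)) by ring.
  eapply Rle_lt_trans; [apply Cmod_triangle|].
  rewrite Cmod_mult. pose proof (Cmod_ge_0 (w - z)). nra.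
Qed.

Lemma cdiff_inv_sub (c z : C) : z <> c -> cdiff (fun w => / (w - c)) z.
Proof.
  intros Hzc. set (r := Cmod (z - c)).
  assert (Hr : (0 < r)%R) by (apply Cmod_sub_pos, Hzc).
  exists (- / ((z - c) * (z - c))). intros eps Heps.
  exists (Rmin (r / 2) (eps * r * r * r / 2)). split.
  { apply Rmin_pos; [lra|]. apply Rdiv_lt_0_compat; [|lra]. repeat apply Rmult_lt_0_compat; lra. }
  intros w Hw.
  assert (H1 : (Cmod (w - z) < r / 2)%R) by (eapply Rlt_le_trans; [apply Hw | apply Rmin_l]).
  assert (H2 : (Cmod (w - z) < eps * r * r * r / 2)%R) by (eapply Rlt_le_trans; [apply Hw | apply Rmin_r]).
  assert (Hwc : (r / 2 <= Cmod (w - c))%R).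
  { pose proof (Cmod_sub_ge (z - c) (z - w)) as H.
    replace (z - c - (z - w)) with (w - c) in H by ring.
    rewrite (Cmod_sub_comm z w) in H. fold r in H. lra. }
  assert (Hwc0 : w - c <> 0) by (intro E; rewrite E, Cmod_0 in Hwc; lra).
  assert (Hzc0 : z - c <> 0) by (apply Cminus_neq_0, Hzc).
  replace (/ (w - c) - / (z - c) - - / ((z - c) * (z - c)) * (w - z))
    with ((w - z) * (w - z) / ((w - c) * ((z - c) * (z - c)))) by (field; split; assumption).
  rewrite Cmod_div by (repeat apply Cmult_neq_0; assumption).
  rewrite !Cmod_mult. fold r.
  set (n := Cmod (w - z)) in *. set (q := Cmod (w - c)) in *.
  assert (Hn : (0 <= n)%R) by apply Cmod_ge_0.
  assert (Hqr : (0 < q * (r * r))%R) by (apply Rmult_lt_0_compat; [lra | nra]).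
  apply (Rmult_le_reg_r (q * (r * r))); [exact Hqr|].
  unfold Rdiv. rewrite Rmult_assoc, Rinv_l, Rmult_1_r by lra.
  assert (eps * (r * r) * (r / 2) <= eps * (r * r) * q)%R
    by (apply Rmult_le_compat_l; [nra | exact Hwc]).
  assert (n <= eps * (q * (r * r)))%R by lra.
  nra.
Qed.

(** * Integrals of complex-valued functions of a real variable *)

Notation is_cint := (@is_RInt C_R_NormedModule).
Notation ex_cint := (@ex_RInt C_R_NormedModule).
Definition cint (h : R -> C) (a b : R) : C := RInt (V := C_R_CompleteNormedModule) h a b.

Lemma norm_C_R (z : C) : norm (K := R_AbsRing) (V := C_R_NormedModule) z = Cmod z.
Proof.
  destruct z as [x y]. unfold norm; simpl. unfold prod_norm, Cmod; simpl.
  unfold norm; simpl. unfold abs; simpl.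
  rewrite !Rmult_1_r, <- !Rsqr_def, <- !Rsqr_abs. reflexivity.
Qed.

Lemma cint_correct (h : R -> C) (a b : R) : ex_cint h a b -> is_cint h a b (cint h a b).
Proof. apply (RInt_correct (V := C_R_CompleteNormedModule)). Qed.

Lemma cint_unique (h : R -> C) (a b : R) (l : C) : is_cint h a b l -> cint h a b = l.
Proof. apply (is_RInt_unique (V := C_R_CompleteNormedModule)). Qed.

Lemma Cmod_cint_le (h : R -> C) (a b M : R) : (a <= b)%R -> ex_cint h a b ->
  (forall t, (a <= t <= b)%R -> (Cmod (h t) <= M)%R) -> (Cmod (cint h a b) <= (b - a) * M)%R.
Proof.
  intros Hab Hex HM. rewrite <- norm_C_R.
  apply (norm_RInt_le_const (V := C_R_NormedModule) h a b); [exact Hab | | apply cint_correct, Hex].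
  intros t Ht. rewrite norm_C_R. apply HM, Ht.
Qed.

Lemma is_cint_pair (h : R -> C) (a b lr li : R) :
  is_RInt (fun t => Re (h t)) a b lr -> is_RInt (fun t => Im (h t)) a b li -> is_cint h a b (lr, li).
Proof. apply (is_RInt_fct_extend_pair (U := R_NormedModule) (V := R_NormedModule)). Qed.

Lemma is_cint_Re (h : R -> C) (a b : R) (l : C) :
  is_cint h a b l -> is_RInt (fun t => Re (h t)) a b (Re l).
Proof. apply (is_RInt_fct_extend_fst (U := R_NormedModule) (V := R_NormedModule)). Qed.

Lemma is_cint_Im (h : R -> C) (a b : R) (l : C) :
  is_cint h a b l -> is_RInt (fun t => Im (h t)) a b (Im l).
Proof. apply (is_RInt_fct_extend_snd (U := R_NormedModule) (V := R_NormedModule)). Qed.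

Lemma Re_cint (h : R -> C) (a b : R) : ex_cint h a b -> Re (cint h a b) = RInt (fun t => Re (h t)) a b.
Proof. intros H. symmetry. apply is_RInt_unique, is_cint_Re, cint_correct, H. Qed.

Lemma Im_cint (h : R -> C) (a b : R) : ex_cint h a b -> Im (cint h a b) = RInt (fun t => Im (h t)) a b.
Proof. intros H. symmetry. apply is_RInt_unique, is_cint_Im, cint_correct, H. Qed.

Lemma is_cint_scal (c : C) (h : R -> C) (a b : R) (l : C) :
  is_cint h a b l -> is_cint (fun t => c * h t) a b (c * l).
Proof.
  intros H. pose proof (is_cint_Re _ _ _ _ H) as Hr. pose proof (is_cint_Im _ _ _ _ H) as Hi.
  destruct c as [cr ci], l as [lr li]. apply is_cint_pair.
  - apply (is_RInt_ext (fun t => minus (scal cr (Re (h t))) (scal ci (Im (h t))))).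
    { intros t _. destruct (h t). reflexivity. }
    apply (is_RInt_minus (V := R_NormedModule)); apply (is_RInt_scal (V := R_NormedModule)); assumption.
  - apply (is_RInt_ext (fun t => plus (scal cr (Im (h t))) (scal ci (Re (h t))))).
    { intros t _. destruct (h t). reflexivity. }
    apply (is_RInt_plus (V := R_NormedModule)); apply (is_RInt_scal (V := R_NormedModule)); assumption.
Qed.

Lemma cint_minus (f g : R -> C) (a b : R) : ex_cint f a b -> ex_cint g a b ->
  cint (fun t => f t - g t) a b = cint f a b - cint g a b.
Proof.
  intros Hf Hg. apply cint_unique.
  apply (is_RInt_minus (V := C_R_NormedModule)); apply cint_correct; assumption.
Qed.

Lemma cint_scal (c : C) (h : R -> C) (a b : R) : ex_cint h a b -> cint (fun t => c * h t) a b = c * cint h a b.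
Proof. intros Hh. apply cint_unique, is_cint_scal, cint_correct, Hh. Qed.

Lemma cint_Chasles (h : R -> C) (a b c : R) : ex_cint h a b -> ex_cint h b c ->
  cint h a b + cint h b c = cint h a c.
Proof. apply (RInt_Chasles (V := C_R_CompleteNormedModule)). Qed.

Lemma cint_ext (f g : R -> C) (a b : R) : (a <= b)%R ->
  (forall t, (a <= t <= b)%R -> f t = g t) -> cint f a b = cint g a b.
Proof.
  intros Hab E. apply (RInt_ext (V := C_R_CompleteNormedModule)).
  intros t Ht. rewrite Rmin_left, Rmax_right in Ht by lra. apply E; lra.
Qed.

Lemma is_cint_const (c : C) (a b : R) : is_cint (fun _ => c) a b ((b - a)%R * c).
Proof.
  destruct c as [cr ci].
  replace ((b - a)%R * (cr, ci)) with (((b - a) * cr)%R, ((b - a) * ci)%R)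
    by (apply injective_projections; simpl; ring).
  apply is_cint_pair; apply (is_RInt_const (V := R_NormedModule)).
Qed.

Lemma is_RInt_id (a b : R) : is_RInt (fun t => t) a b ((b * b - a * a) / 2)%R.
Proof.
  replace ((b * b - a * a) / 2)%R with (b * b / 2 - a * a / 2)%R by field.
  apply (is_RInt_derive (fun t => t * t / 2)%R).
  - intros t _. auto_derive; [exact I | field].
  - intros t _. apply continuous_id.
Qed.

Lemma is_cint_hline (a b y : R) : is_cint (fun t => (t, y)) a b (((b * b - a * a) / 2)%R, ((b - a) * y)%R).
Proof. apply is_cint_pair; [apply is_RInt_id | apply (is_RInt_const (V := R_NormedModule))]. Qed.

Lemma is_cint_vline (a b x : R) : is_cint (fun t => (x, t)) a b (((b - a) * x)%R, ((b * b - a * a) / 2)%R).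
Proof. apply is_cint_pair; [apply (is_RInt_const (V := R_NormedModule)) | apply is_RInt_id]. Qed.

Lemma continuous_ccont_isometry (g : C -> C) (u : R -> C) (t : R) :
  (forall s, Cmod (u s - u t) = Rabs (s - t)) -> ccont g (u t) ->
  continuous (U := C_R_NormedModule) (fun s => g (u s)) t.
Proof.
  intros Hu Hg. apply (filterlim_locally (U := C_R_NormedModule)). intros eps.
  destruct (Hg eps (cond_pos eps)) as [d [Hd Hs]].
  exists (mkposreal d Hd). intros s Hst.
  apply C_NormedModule_mixin_compat1, Hs. rewrite Hu. exact Hst.
Qed.

Lemma continuous_hline (g : C -> C) (t y : R) : ccont g (t, y) ->
  continuous (U := C_R_NormedModule) (fun s => g (s, y)) t.
Proof.
  apply (continuous_ccont_isometry g (fun s => (s, y))). intros s.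
  replace ((s, y) - (t, y)) with (RtoC (s - t)) by (apply injective_projections; simpl; ring).
  apply Cmod_R.
Qed.

Lemma continuous_vline (g : C -> C) (x t : R) : ccont g (x, t) ->
  continuous (U := C_R_NormedModule) (fun s => g (x, s)) t.
Proof.
  apply (continuous_ccont_isometry g (fun s => (x, s))). intros s.
  replace ((x, s) - (x, t)) with (Ci * RtoC (s - t)) by (apply injective_projections; simpl; ring).
  rewrite Cmod_mult, Cmod_R, Cmod_Ci. ring.
Qed.

Lemma ex_cint_continuous (h : R -> C) (a b : R) : (a <= b)%R ->
  (forall t, (a <= t <= b)%R -> continuous (U := C_R_NormedModule) h t) -> ex_cint h a b.
Proof.
  intros Hab Hh. apply (ex_RInt_continuous (V := C_R_CompleteNormedModule)).
  intros t Ht. rewrite Rmin_left, Rmax_right in Ht by lra. apply Hh, Ht.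
Qed.

Lemma continuous_bounded (h : R -> C) (a b : R) : (a <= b)%R ->
  (forall t, (a <= t <= b)%R -> continuous (U := C_R_NormedModule) h t) ->
  exists M, forall t, (a <= t <= b)%R -> (Cmod (h t) <= M)%R.
Proof.
  intros Hab Hh.
  destruct (continuity_ab_maj (fun t => Cmod (h t)) a b Hab) as [t0 [HM _]].
  - intros t Ht. apply continuity_pt_filterlim.
    apply (filterlim_ext (fun s => norm (K := R_AbsRing) (V := C_R_NormedModule) (h s))).
    { intros s. apply norm_C_R. }
    rewrite <- (norm_C_R (h t)).
    apply (continuous_comp (V := C_R_NormedModule) h norm).
    + apply Hh, Ht.
    + apply filterlim_norm.
  - exists (Cmod (h t0)). exact HM.
Qed.

Lemma continuous_Re (h : R -> C) (t : R) : continuous (U := C_R_NormedModule) h t ->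
  continuous (fun s => Re (h s)) t.
Proof.
  intros Hh. apply (continuous_comp (V := C_R_NormedModule) h); [exact Hh|].
  destruct (h t). apply continuous_fst.
Qed.

Lemma continuous_Im (h : R -> C) (t : R) : continuous (U := C_R_NormedModule) h t ->
  continuous (fun s => Im (h s)) t.
Proof.
  intros Hh. apply (continuous_comp (V := C_R_NormedModule) h); [exact Hh|].
  destruct (h t). apply continuous_snd.
Qed.

Lemma RInt_lt_0 (f : R -> R) (a b : R) : (a < b)%R -> (forall x, (a < x < b)%R -> (f x < 0)%R) ->
  (forall x, (a <= x <= b)%R -> continuous f x) -> (RInt f a b < 0)%R.
Proof.
  intros Hab Hf Hc.
  replace 0%R with (RInt (fun _ => 0%R) a b) by (rewrite RInt_const; apply Rmult_0_r).
  apply RInt_lt; try assumption. intros; apply continuous_const.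
Qed.

(** * Contour integrals over rectangles *)

Definition rect_int (g : C -> C) (x1 x2 y1 y2 : R) : C :=
  cint (fun t => g (t, y1)) x1 x2 + Ci * cint (fun t => g (x2, t)) y1 y2
  - cint (fun t => g (t, y2)) x1 x2 - Ci * cint (fun t => g (x1, t)) y1 y2.

Definition on_boundary (x1 x2 y1 y2 x y : R) : Prop :=
  (x1 <= x <= x2)%R /\ (y1 <= y <= y2)%R /\ (x = x1 \/ x = x2 \/ y = y1 \/ y = y2).

Definition ccont_on_boundary (g : C -> C) (x1 x2 y1 y2 : R) : Prop :=
  forall x y, on_boundary x1 x2 y1 y2 x y -> ccont g (x, y).

Definition ccont_on_rect (g : C -> C) (x1 x2 y1 y2 : R) : Prop :=
  forall x y, (x1 <= x <= x2)%R -> (y1 <= y <= y2)%R -> ccont g (x, y).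

Lemma ccont_on_rect_boundary (g : C -> C) (x1 x2 y1 y2 : R) :
  ccont_on_rect g x1 x2 y1 y2 -> ccont_on_boundary g x1 x2 y1 y2.
Proof. intros H x y (Hx & Hy & _). apply H; assumption. Qed.

Lemma ccont_on_subrect (g : C -> C) (x1 x2 y1 y2 x1' x2' y1' y2' : R) :
  ccont_on_rect g x1 x2 y1 y2 -> (x1 <= x1')%R -> (x2' <= x2)%R -> (y1 <= y1')%R -> (y2' <= y2)%R ->
  ccont_on_rect g x1' x2' y1' y2'.
Proof. intros H ? ? ? ? x y Hx Hy. apply H; lra. Qed.

Lemma ex_cint_hline (g : C -> C) (x1 x2 y : R) : (x1 <= x2)%R ->
  (forall t, (x1 <= t <= x2)%R -> ccont g (t, y)) -> ex_cint (fun t => g (t, y)) x1 x2.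
Proof. intros Hx Hg. apply ex_cint_continuous; [exact Hx|]. intros t Ht. apply continuous_hline, Hg, Ht. Qed.

Lemma ex_cint_vline (g : C -> C) (x y1 y2 : R) : (y1 <= y2)%R ->
  (forall t, (y1 <= t <= y2)%R -> ccont g (x, t)) -> ex_cint (fun t => g (x, t)) y1 y2.
Proof. intros Hy Hg. apply ex_cint_continuous; [exact Hy|]. intros t Ht. apply continuous_vline, Hg, Ht. Qed.

Ltac boundary := unfold on_boundary; split; [lra | split; [lra | intuition]].

Lemma ex_cint_edges (g : C -> C) (x1 x2 y1 y2 : R) : (x1 <= x2)%R -> (y1 <= y2)%R ->
  ccont_on_boundary g x1 x2 y1 y2 ->
  ex_cint (fun t => g (t, y1)) x1 x2 /\ ex_cint (fun t => g (t, y2)) x1 x2 /\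
  ex_cint (fun t => g (x1, t)) y1 y2 /\ ex_cint (fun t => g (x2, t)) y1 y2.
Proof.
  intros Hx Hy Hg.
  split; [|split; [|split]];
    [apply ex_cint_hline | apply ex_cint_hline | apply ex_cint_vline | apply ex_cint_vline];
    try assumption; intros t Ht; apply Hg; boundary.
Qed.

Lemma rect_int_split_x (g : C -> C) (x1 xm x2 y1 y2 : R) : (x1 <= xm <= x2)%R -> (y1 <= y2)%R ->
  ccont_on_rect g x1 x2 y1 y2 -> rect_int g x1 x2 y1 y2 = rect_int g x1 xm y1 y2 + rect_int g xm x2 y1 y2.
Proof.
  intros Hx Hy Hg. unfold rect_int.
  destruct (ex_cint_edges g x1 xm y1 y2) as (H1 & H2 & _); try lra.
  { apply ccont_on_rect_boundary. apply (ccont_on_subrect g x1 x2 y1 y2); [assumption | lra ..]. }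
  destruct (ex_cint_edges g xm x2 y1 y2) as (H3 & H4 & _); try lra.
  { apply ccont_on_rect_boundary. apply (ccont_on_subrect g x1 x2 y1 y2); [assumption | lra ..]. }
  rewrite <- (cint_Chasles _ x1 xm x2 H1 H3), <- (cint_Chasles _ x1 xm x2 H2 H4). ring.
Qed.

Lemma rect_int_split_y (g : C -> C) (x1 x2 y1 ym y2 : R) : (x1 <= x2)%R -> (y1 <= ym <= y2)%R ->
  ccont_on_rect g x1 x2 y1 y2 -> rect_int g x1 x2 y1 y2 = rect_int g x1 x2 y1 ym + rect_int g x1 x2 ym y2.
Proof.
  intros Hx Hy Hg. unfold rect_int.
  destruct (ex_cint_edges g x1 x2 y1 ym) as (_ & _ & H1 & H2); try lra.
  { apply ccont_on_rect_boundary. apply (ccont_on_subrect g x1 x2 y1 y2); [assumption | lra ..]. }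
  destruct (ex_cint_edges g x1 x2 ym y2) as (_ & _ & H3 & H4); try lra.
  { apply ccont_on_rect_boundary. apply (ccont_on_subrect g x1 x2 y1 y2); [assumption | lra ..]. }
  rewrite <- (cint_Chasles _ y1 ym y2 H1 H3), <- (cint_Chasles _ y1 ym y2 H2 H4). ring.
Qed.

Lemma rect_int_minus (f g : C -> C) (x1 x2 y1 y2 : R) : (x1 <= x2)%R -> (y1 <= y2)%R ->
  ccont_on_boundary f x1 x2 y1 y2 -> ccont_on_boundary g x1 x2 y1 y2 ->
  rect_int (fun w => f w - g w) x1 x2 y1 y2 = rect_int f x1 x2 y1 y2 - rect_int g x1 x2 y1 y2.
Proof.
  intros Hx Hy Hf Hg. unfold rect_int.
  destruct (ex_cint_edges f x1 x2 y1 y2) as (F1 & F2 & F3 & F4); try assumption.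
  destruct (ex_cint_edges g x1 x2 y1 y2) as (G1 & G2 & G3 & G4); try assumption.
  rewrite (cint_minus _ _ _ _ F1 G1), (cint_minus _ _ _ _ F2 G2),
    (cint_minus _ _ _ _ F3 G3), (cint_minus _ _ _ _ F4 G4).
  ring.
Qed.

Lemma rect_int_scal (c : C) (g : C -> C) (x1 x2 y1 y2 : R) : (x1 <= x2)%R -> (y1 <= y2)%R ->
  ccont_on_boundary g x1 x2 y1 y2 -> rect_int (fun w => c * g w) x1 x2 y1 y2 = c * rect_int g x1 x2 y1 y2.
Proof.
  intros Hx Hy Hg. unfold rect_int.
  destruct (ex_cint_edges g x1 x2 y1 y2) as (G1 & G2 & G3 & G4); try assumption.
  rewrite (cint_scal c _ _ _ G1), (cint_scal c _ _ _ G2), (cint_scal c _ _ _ G3), (cint_scal c _ _ _ G4).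
  ring.
Qed.

Lemma rect_int_ext (f g : C -> C) (x1 x2 y1 y2 : R) : (x1 <= x2)%R -> (y1 <= y2)%R ->
  (forall x y, on_boundary x1 x2 y1 y2 x y -> f (x, y) = g (x, y)) ->
  rect_int f x1 x2 y1 y2 = rect_int g x1 x2 y1 y2.
Proof.
  intros Hx Hy E. unfold rect_int.
  rewrite (cint_ext (fun t => f (t, y1)) (fun t => g (t, y1))), (cint_ext (fun t => f (t, y2)) (fun t => g (t, y2))),
    (cint_ext (fun t => f (x1, t)) (fun t => g (x1, t))), (cint_ext (fun t => f (x2, t)) (fun t => g (x2, t)));
    try reflexivity; try assumption; intros t Ht; apply E; boundary.
Qed.

Lemma rect_int_affine (c0 c1 : C) (x1 x2 y1 y2 : R) : rect_int (fun w => c0 + c1 * w) x1 x2 y1 y2 = 0.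
Proof.
  assert (Hline : forall (u : R -> C) a b l, is_cint u a b l ->
    cint (fun t => c0 + c1 * u t) a b = (b - a)%R * c0 + c1 * l).
  { intros u a b l Hu. apply cint_unique.
    apply (is_RInt_plus (V := C_R_NormedModule)); [apply is_cint_const | apply is_cint_scal, Hu]. }
  unfold rect_int.
  rewrite (Hline (fun t => (t, y1)) _ _ _ (is_cint_hline _ _ _)), (Hline (fun t => (t, y2)) _ _ _ (is_cint_hline _ _ _)),
    (Hline (fun t => (x1, t)) _ _ _ (is_cint_vline _ _ _)), (Hline (fun t => (x2, t)) _ _ _ (is_cint_vline _ _ _)).
  apply injective_projections; simpl; ring.
Qed.

Lemma Cmod_rect_int_le (g : C -> C) (x1 x2 y1 y2 M : R) : (x1 <= x2)%R -> (y1 <= y2)%R ->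
  ccont_on_boundary g x1 x2 y1 y2 -> (forall x y, on_boundary x1 x2 y1 y2 x y -> (Cmod (g (x, y)) <= M)%R) ->
  (Cmod (rect_int g x1 x2 y1 y2) <= 2 * ((x2 - x1) + (y2 - y1)) * M)%R.
Proof.
  intros Hx Hy Hg HM.
  destruct (ex_cint_edges g x1 x2 y1 y2) as (G1 & G2 & G3 & G4); try assumption.
  assert (A1 := Cmod_cint_le _ _ _ M Hx G1 ltac:(intros t Ht; apply HM; boundary)).
  assert (A2 := Cmod_cint_le _ _ _ M Hx G2 ltac:(intros t Ht; apply HM; boundary)).
  assert (A3 := Cmod_cint_le _ _ _ M Hy G3 ltac:(intros t Ht; apply HM; boundary)).
  assert (A4 := Cmod_cint_le _ _ _ M Hy G4 ltac:(intros t Ht; apply HM; boundary)).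
  assert (Htri : forall a b c d : C, (Cmod (a + Ci * b - c - Ci * d) <= Cmod a + Cmod b + Cmod c + Cmod d)%R).
  { intros a b c d.
    assert (Hsub : forall u v, (Cmod (u - v) <= Cmod u + Cmod v)%R).
    { intros u v. unfold Cminus. rewrite <- (Cmod_opp v). apply Cmod_triangle. }
    assert (Hi : forall u, Cmod (Ci * u) = Cmod u).
    { intros u. rewrite Cmod_mult, Cmod_Ci. ring. }
    pose proof (Hsub (a + Ci * b - c) (Ci * d)). pose proof (Hsub (a + Ci * b) c).
    pose proof (Cmod_triangle a (Ci * b)). rewrite Hi in *. lra. }
  eapply Rle_trans; [apply Htri | lra].
Qed.

Lemma ccont_on_boundary_bounded (g : C -> C) (x1 x2 y1 y2 : R) : (x1 <= x2)%R -> (y1 <= y2)%R ->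
  ccont_on_boundary g x1 x2 y1 y2 ->
  exists M, forall x y, on_boundary x1 x2 y1 y2 x y -> (Cmod (g (x, y)) <= M)%R.
Proof.
  intros Hx Hy Hg.
  destruct (continuous_bounded (fun t => g (t, y1)) x1 x2 Hx) as [M1 H1].
  { intros t Ht. apply continuous_hline, Hg. boundary. }
  destruct (continuous_bounded (fun t => g (t, y2)) x1 x2 Hx) as [M2 H2].
  { intros t Ht. apply continuous_hline, Hg. boundary. }
  destruct (continuous_bounded (fun t => g (x1, t)) y1 y2 Hy) as [M3 H3].
  { intros t Ht. apply continuous_vline, Hg. boundary. }
  destruct (continuous_bounded (fun t => g (x2, t)) y1 y2 Hy) as [M4 H4].
  { intros t Ht. apply continuous_vline, Hg. boundary. }
  set (M := Rmax (Rmax M1 M2) (Rmax M3 M4)).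
  assert (HM : (M1 <= M /\ M2 <= M /\ M3 <= M /\ M4 <= M)%R).
  { pose proof (Rmax_l (Rmax M1 M2) (Rmax M3 M4)). pose proof (Rmax_r (Rmax M1 M2) (Rmax M3 M4)).
    pose proof (Rmax_l M1 M2). pose proof (Rmax_r M1 M2). pose proof (Rmax_l M3 M4). pose proof (Rmax_r M3 M4).
    unfold M. lra. }
  exists M. intros x y (Hx' & Hy' & [-> | [-> | [-> | ->]]]);
    [specialize (H3 y Hy') | specialize (H4 y Hy') | specialize (H1 x Hx') | specialize (H2 x Hx')]; lra.
Qed.

(** * Goursat's theorem *)

Lemma nested_intervals (a b : nat -> R) : Un_growing a -> Un_decreasing b -> (forall n, (a n <= b n)%R) ->
  exists p, forall n, (a n <= p <= b n)%R.
Proof.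
  intros Ha Hb Hab.
  assert (Hcross : forall m n, (a m <= b n)%R).
  { intros m n. destruct (Nat.le_ge_cases m n) as [Hmn | Hnm].
    - pose proof (growing_prop a n m Ha Hmn). specialize (Hab n). lra.
    - pose proof (decreasing_prop b n m Hb Hnm). specialize (Hab m). lra. }
  destruct (completeness (fun x => exists n, x = a n)) as [p [Hub Hlub]].
  - exists (b 0%nat). intros x [n ->]. apply Hcross.
  - exists (a 0%nat). exists 0%nat. reflexivity.
  - exists p. intros n. split.
    + apply Hub. exists n. reflexivity.
    + apply Hlub. intros x [m ->]. apply Hcross.
Qed.

Lemma mult_pow_half_lt (S d : R) : (0 <= S)%R -> (0 < d)%R -> exists N, (S * (/ 2) ^ N < d)%R.
Proof.
  intros HS Hd.
  destruct (pow_lt_1_zero (/ 2) ltac:(rewrite Rabs_right; lra) (d / (S + 1))%R) as [N HN].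
  { apply Rdiv_lt_0_compat; lra. }
  exists N. specialize (HN N (Nat.le_refl N)). rewrite Rabs_right in HN by (apply Rle_ge, pow_le; lra).
  pose proof (pow_le (/ 2) N ltac:(lra)).
  apply (Rmult_lt_compat_l (S + 1)) in HN; [|lra].
  replace ((S + 1) * (d / (S + 1)))%R with d in HN by (field; lra).
  lra.
Qed.

Record rect := Rect { rx1 : R; rx2 : R; ry1 : R; ry2 : R }.

Definition rint (g : C -> C) (r : rect) : C := rect_int g (rx1 r) (rx2 r) (ry1 r) (ry2 r).

Definition quarter (i j : bool) (r : rect) : rect :=
  let xm := ((rx1 r + rx2 r) / 2)%R in
  let ym := ((ry1 r + ry2 r) / 2)%R in
  Rect (if i then xm else rx1 r) (if i then rx2 r else xm) (if j then ym else ry1 r) (if j then ry2 r else ym).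

Section Bisection.

Variable g : C -> C.

Lemma rint_quarters (r : rect) : (rx1 r <= rx2 r)%R -> (ry1 r <= ry2 r)%R ->
  ccont_on_rect g (rx1 r) (rx2 r) (ry1 r) (ry2 r) ->
  rint g r = rint g (quarter false false r) + rint g (quarter true false r)
           + rint g (quarter false true r) + rint g (quarter true true r).
Proof.
  intros Hx Hy Hc. destruct r as [x1 x2 y1 y2]. unfold rint, quarter; simpl in *.
  rewrite (rect_int_split_x g x1 ((x1 + x2) / 2) x2) by (lra || assumption).
  rewrite (rect_int_split_y g x1 ((x1 + x2) / 2) y1 ((y1 + y2) / 2) y2)
    by (lra || apply (ccont_on_subrect g x1 x2 y1 y2); lra || assumption).
  rewrite (rect_int_split_y g ((x1 + x2) / 2) x2 y1 ((y1 + y2) / 2) y2)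
    by (lra || apply (ccont_on_subrect g x1 x2 y1 y2); lra || assumption).
  ring.
Qed.

Definition heavy_quarter (r : rect) : rect :=
  let pick q q' := if Rle_dec (Cmod (rint g r)) (4 * Cmod (rint g q)) then q else q' in
  pick (quarter false false r) (pick (quarter true false r) (pick (quarter false true r) (quarter true true r))).

Lemma heavy_quarter_quarter (r : rect) : exists i j, heavy_quarter r = quarter i j r.
Proof. unfold heavy_quarter. repeat (case Rle_dec; intros); eauto. Qed.

Lemma Cmod_rint_le_heavy_quarter (r : rect) : (rx1 r <= rx2 r)%R -> (ry1 r <= ry2 r)%R ->
  ccont_on_rect g (rx1 r) (rx2 r) (ry1 r) (ry2 r) ->
  (Cmod (rint g r) <= 4 * Cmod (rint g (heavy_quarter r)))%R.
Proof.
  intros Hx Hy Hc. pose proof (rint_quarters r Hx Hy Hc) as E. unfold heavy_quarter.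
  repeat (case Rle_dec; [intros; assumption | intros]).
  assert (Cmod (rint g r) <= Cmod (rint g (quarter false false r)) + Cmod (rint g (quarter true false r))
          + Cmod (rint g (quarter false true r)) + Cmod (rint g (quarter true true r)))%R.
  { rewrite E. repeat (eapply Rle_trans; [apply Cmod_triangle | apply Rplus_le_compat_r]). apply Rle_refl. }
  lra.
Qed.

Definition subrect (q r : rect) : Prop :=
  (rx1 r <= rx1 q)%R /\ (rx2 q <= rx2 r)%R /\ (ry1 r <= ry1 q)%R /\ (ry2 q <= ry2 r)%R.

Lemma quarter_spec (i j : bool) (r : rect) : (rx1 r <= rx2 r)%R -> (ry1 r <= ry2 r)%R ->
  let q := quarter i j r in
  subrect q r /\ (rx2 q - rx1 q = (rx2 r - rx1 r) / 2)%R /\ (ry2 q - ry1 q = (ry2 r - ry1 r) / 2)%R.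
Proof. intros Hx Hy. destruct i, j; unfold subrect; simpl; repeat split; lra. Qed.

Fixpoint bisect (r : rect) (n : nat) : rect :=
  match n with O => r | S n => heavy_quarter (bisect r n) end.

Variable r0 : rect.
Hypothesis r0_x : (rx1 r0 <= rx2 r0)%R.
Hypothesis r0_y : (ry1 r0 <= ry2 r0)%R.
Hypothesis g_ccont : ccont_on_rect g (rx1 r0) (rx2 r0) (ry1 r0) (ry2 r0).

Lemma bisect_shape (n : nat) :
  let r := bisect r0 n in
  subrect r r0 /\ (rx2 r - rx1 r = (rx2 r0 - rx1 r0) * (/ 2) ^ n)%R /\
  (ry2 r - ry1 r = (ry2 r0 - ry1 r0) * (/ 2) ^ n)%R.
Proof.
  induction n as [|n IH]; simpl.
  - unfold subrect. repeat split; lra.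
  - destruct IH as (Hsub & Hw & Hh). destruct (heavy_quarter_quarter (bisect r0 n)) as (i & j & ->).
    assert (Hpow : (0 <= (/ 2) ^ n)%R) by (apply pow_le; lra).
    destruct (quarter_spec i j (bisect r0 n)) as (Hq & Hqw & Hqh); [nra | nra |].
    unfold subrect in *. repeat split; lra.
Qed.

Lemma bisect_wf (n : nat) : (rx1 (bisect r0 n) <= rx2 (bisect r0 n))%R /\ (ry1 (bisect r0 n) <= ry2 (bisect r0 n))%R.
Proof.
  destruct (bisect_shape n) as (_ & Hw & Hh).
  assert (Hpow : (0 <= (/ 2) ^ n)%R) by (apply pow_le; lra).
  split; nra.
Qed.

Lemma bisect_ccont (n : nat) :
  ccont_on_rect g (rx1 (bisect r0 n)) (rx2 (bisect r0 n)) (ry1 (bisect r0 n)) (ry2 (bisect r0 n)).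
Proof.
  destruct (bisect_shape n) as ((H1 & H2 & H3 & H4) & _).
  apply (ccont_on_subrect g (rx1 r0) (rx2 r0) (ry1 r0) (ry2 r0)); assumption.
Qed.

Lemma bisect_nested (n : nat) : subrect (bisect r0 (S n)) (bisect r0 n).
Proof.
  simpl. destruct (heavy_quarter_quarter (bisect r0 n)) as (i & j & ->).
  destruct (bisect_wf n). apply quarter_spec; assumption.
Qed.

Lemma Cmod_rint_le_bisect (n : nat) : (Cmod (rint g r0) <= 4 ^ n * Cmod (rint g (bisect r0 n)))%R.
Proof.
  induction n as [|n IH]; simpl.
  - lra.
  - destruct (bisect_wf n) as [Hx Hy].
    pose proof (Cmod_rint_le_heavy_quarter _ Hx Hy (bisect_ccont n)).
    pose proof (pow_le 4 n ltac:(lra)). nra.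
Qed.

Lemma bisect_common_point : exists px py, forall n,
  (rx1 (bisect r0 n) <= px <= rx2 (bisect r0 n))%R /\ (ry1 (bisect r0 n) <= py <= ry2 (bisect r0 n))%R.
Proof.
  destruct (nested_intervals (fun n => rx1 (bisect r0 n)) (fun n => rx2 (bisect r0 n))) as [px Hpx].
  { intros n. destruct (bisect_nested n) as (? & ? & ? & ?). lra. }
  { intros n. destruct (bisect_nested n) as (? & ? & ? & ?). lra. }
  { intros n. apply bisect_wf. }
  destruct (nested_intervals (fun n => ry1 (bisect r0 n)) (fun n => ry2 (bisect r0 n))) as [py Hpy].
  { intros n. destruct (bisect_nested n) as (? & ? & ? & ?). lra. }
  { intros n. destruct (bisect_nested n) as (? & ? & ? & ?). lra. }
  { intros n. apply bisect_wf. }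
  exists px, py. intros n. split; [apply Hpx | apply Hpy].
Qed.

End Bisection.

Lemma Cmod_rect_int_le_linear_approx (g : C -> C) (l : C) (px py x1 x2 y1 y2 eps : R) :
  (x1 <= px <= x2)%R -> (y1 <= py <= y2)%R -> (0 <= eps)%R ->
  (forall x y, (x1 <= x <= x2)%R -> (y1 <= y <= y2)%R -> cdiff g (x, y)) ->
  (forall x y, (x1 <= x <= x2)%R -> (y1 <= y <= y2)%R ->
     (Cmod (g (x, y) - g (px, py) - l * ((x, y) - (px, py))) <= eps * Cmod ((x, y) - (px, py)))%R) ->
  (Cmod (rect_int g x1 x2 y1 y2) <= 2 * eps * ((x2 - x1) + (y2 - y1)) ^ 2)%R.
Proof.
  intros Hpx Hpy Heps Hg Happrox. set (p := (px, py)) in *. set (S := ((x2 - x1) + (y2 - y1))%R).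
  set (A := fun w => (g p - l * p) + l * w).
  assert (HA : forall w, cdiff A w).
  { intros w. apply cdiff_plus; [apply cdiff_const | apply cdiff_mult; [apply cdiff_const | apply cdiff_id]]. }
  assert (E : rect_int g x1 x2 y1 y2 = rect_int (fun w => g w - A w) x1 x2 y1 y2).
  { rewrite rect_int_minus; try lra.
    - unfold A. rewrite rect_int_affine. ring.
    - intros x y (Hx & Hy & _). apply ccont_of_cdiff, Hg; assumption.
    - intros x y _. apply ccont_of_cdiff, HA. }
  rewrite E. replace (2 * eps * S ^ 2)%R with (2 * S * (eps * S))%R by ring.
  apply Cmod_rect_int_le; try lra.
  - intros x y (Hx & Hy & _). apply ccont_of_cdiff, cdiff_minus; [apply Hg; assumption | apply HA].
  - intros x y (Hx & Hy & _).
    replace (g (x, y) - A (x, y)) with (g (x, y) - g p - l * ((x, y) - p)) by (unfold A; ring).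
    eapply Rle_trans; [apply Happrox; assumption|]. apply Rmult_le_compat_l; [exact Heps|].
    eapply Rle_trans; [apply Cmod_pair_sub_le|].
    unfold S. apply Rplus_le_compat; apply Rabs_le; lra.
Qed.

Theorem goursat (g : C -> C) (x1 x2 y1 y2 : R) : (x1 <= x2)%R -> (y1 <= y2)%R ->
  (forall x y, (x1 <= x <= x2)%R -> (y1 <= y <= y2)%R -> cdiff g (x, y)) ->
  rect_int g x1 x2 y1 y2 = 0.
Proof.
  intros Hx Hy Hg.
  set (r0 := Rect x1 x2 y1 y2).
  assert (Hc : ccont_on_rect g (rx1 r0) (rx2 r0) (ry1 r0) (ry2 r0))
    by (intros x y Hx' Hy'; apply ccont_of_cdiff, Hg; assumption).
  destruct (bisect_common_point g r0 Hx Hy) as (px & py & Hp).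
  destruct (Hp 0%nat) as [Hpx Hpy]. cbn [bisect r0 rx1 rx2 ry1 ry2] in Hpx, Hpy.
  destruct (Hg px py Hpx Hpy) as [l Hl].
  set (S := ((x2 - x1) + (y2 - y1))%R).
  apply (eq_0_of_Cmod_le_eps _ (2 * S ^ 2)). intros eps Heps.
  destruct (Hl eps Heps) as [d [Hd Hdd]].
  destruct (mult_pow_half_lt S d ltac:(unfold S; lra) Hd) as [N HSq].
  set (q := ((/ 2) ^ N)%R) in *.
  assert (Hq : (0 <= q)%R) by (apply pow_le; lra).
  set (rN := bisect g r0 N).
  destruct (bisect_shape g r0 Hx Hy N) as ((Hx1 & Hx2 & Hy1 & Hy2) & Hw & Hh).
  fold rN q in Hx1, Hx2, Hy1, Hy2, Hw, Hh. cbn [r0 rx1 rx2 ry1 ry2] in Hx1, Hx2, Hy1, Hy2, Hw, Hh.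
  destruct (Hp N) as [HpxN HpyN]. fold rN in HpxN, HpyN.
  assert (Hsmall : (Cmod (rint g rN) <= 2 * eps * (S * q) ^ 2)%R).
  { replace (S * q)%R with ((rx2 rN - rx1 rN) + (ry2 rN - ry1 rN))%R by (rewrite Hw, Hh; unfold S; ring).
    unfold rint. apply (Cmod_rect_int_le_linear_approx g l px py); [exact HpxN | exact HpyN | lra | |].
    - intros x y Hx' Hy'. apply Hg; lra.
    - intros x y Hx' Hy'. apply Hdd.
      eapply Rle_lt_trans; [apply Cmod_pair_sub_le|].
      assert (Rabs (x - px) <= (x2 - x1) * q)%R by (apply Rabs_le; lra).
      assert (Rabs (y - py) <= (y2 - y1) * q)%R by (apply Rabs_le; lra).
      unfold S in HSq. lra. }
  assert (H4q : (4 ^ N * q ^ 2 = 1)%R).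
  { replace (q ^ 2)%R with ((/ 2) ^ N * (/ 2) ^ N)%R by (unfold q; ring).
    rewrite <- !Rpow_mult_distr. replace (4 * (/ 2 * / 2))%R with 1%R by field. apply pow1. }
  pose proof (pow_le 4 N ltac:(lra)).
  eapply Rle_trans; [apply (Cmod_rint_le_bisect g r0 Hx Hy Hc N)|]. fold rN.
  eapply Rle_trans; [apply Rmult_le_compat_l; [lra | exact Hsmall]|].
  replace (4 ^ N * (2 * eps * (S * q) ^ 2))%R with (2 * S ^ 2 * eps * (4 ^ N * q ^ 2))%R by ring.
  rewrite H4q. lra.
Qed.

Lemma rect_int_square_around (g : C -> C) (x1 x2 y1 y2 zx zy r : R) :
  (0 < r)%R -> (x1 <= zx - r)%R -> (zx + r <= x2)%R -> (y1 <= zy - r)%R -> (zy + r <= y2)%R ->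
  ccont_on_rect g x1 x2 y1 y2 ->
  (forall x y, (x1 <= x <= x2)%R -> (y1 <= y <= y2)%R -> (x, y) <> (zx, zy) -> cdiff g (x, y)) ->
  rect_int g x1 x2 y1 y2 = rect_int g (zx - r) (zx + r) (zy - r) (zy + r).
Proof.
  intros Hr Hx1 Hx2 Hy1 Hy2 Hc Hg.
  assert (Hsub : forall a b c d, (x1 <= a)%R -> (b <= x2)%R -> (y1 <= c)%R -> (d <= y2)%R ->
    ccont_on_rect g a b c d) by (intros; apply (ccont_on_subrect g x1 x2 y1 y2); assumption).
  assert (Hgoursat : forall a b c d, (x1 <= a <= b)%R -> (b <= x2)%R -> (y1 <= c <= d)%R -> (d <= y2)%R ->
    (b < zx \/ zx < a \/ d < zy \/ zy < c)%R -> rect_int g a b c d = 0).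
  { intros a b c d Ha Hb Hc' Hd Hout. apply goursat; try lra.
    intros x y Hx Hy. apply Hg; try lra. intros E. injection E as -> ->. lra. }
  rewrite (rect_int_split_x g x1 (zx - r) x2) by (lra || assumption).
  rewrite (rect_int_split_x g (zx - r) (zx + r) x2) by (lra || apply Hsub; lra).
  rewrite (rect_int_split_y g (zx - r) (zx + r) y1 (zy - r) y2) by (lra || apply Hsub; lra).
  rewrite (rect_int_split_y g (zx - r) (zx + r) (zy - r) (zy + r) y2) by (lra || apply Hsub; lra).
  rewrite (Hgoursat x1 (zx - r)%R y1 y2), (Hgoursat (zx + r)%R x2 y1 y2),
    (Hgoursat (zx - r)%R (zx + r)%R y1 (zy - r)%R), (Hgoursat (zx - r)%R (zx + r)%R (zy + r)%R y2) by lra.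
  ring.
Qed.

Theorem goursat_except_point (g : C -> C) (x1 x2 y1 y2 zx zy : R) :
  (x1 < zx < x2)%R -> (y1 < zy < y2)%R -> ccont_on_rect g x1 x2 y1 y2 ->
  (forall x y, (x1 <= x <= x2)%R -> (y1 <= y <= y2)%R -> (x, y) <> (zx, zy) -> cdiff g (x, y)) ->
  rect_int g x1 x2 y1 y2 = 0.
Proof.
  intros Hx Hy Hc Hg.
  destruct (Hc zx zy ltac:(lra) ltac:(lra) 1%R Rlt_0_1) as [d0 [Hd0 Hnear]].
  set (M := (Cmod (g (zx, zy)) + 1)%R).
  set (d1 := Rmin (Rmin (zx - x1) (x2 - zx)) (Rmin (Rmin (zy - y1) (y2 - zy)) (d0 / 4))).
  assert (Hd1 : (0 < d1)%R) by (unfold d1; repeat apply Rmin_pos; lra).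
  assert (Hd1s : (d1 <= zx - x1 /\ d1 <= x2 - zx /\ d1 <= zy - y1 /\ d1 <= y2 - zy /\ d1 <= d0 / 4)%R).
  { unfold d1.
    pose proof (Rmin_l (Rmin (zx - x1) (x2 - zx)) (Rmin (Rmin (zy - y1) (y2 - zy)) (d0 / 4))).
    pose proof (Rmin_r (Rmin (zx - x1) (x2 - zx)) (Rmin (Rmin (zy - y1) (y2 - zy)) (d0 / 4))).
    pose proof (Rmin_l (zx - x1) (x2 - zx)). pose proof (Rmin_r (zx - x1) (x2 - zx)).
    pose proof (Rmin_l (Rmin (zy - y1) (y2 - zy)) (d0 / 4)). pose proof (Rmin_r (Rmin (zy - y1) (y2 - zy)) (d0 / 4)).
    pose proof (Rmin_l (zy - y1) (y2 - zy)). pose proof (Rmin_r (zy - y1) (y2 - zy)).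
    lra. }
  apply (eq_0_of_Cmod_le_eps _ (8 * M)). intros eps Heps.
  set (r := Rmin eps (d1 / 2)).
  assert (Hr : (0 < r /\ r <= eps /\ r <= d1 / 2)%R)
    by (unfold r; repeat split; [apply Rmin_pos; lra | apply Rmin_l | apply Rmin_r]).
  rewrite (rect_int_square_around g x1 x2 y1 y2 zx zy r) by (lra || assumption).
  eapply Rle_trans.
  - apply (Cmod_rect_int_le g _ _ _ _ M); try lra.
    + intros x y (Hx' & Hy' & _). apply Hc; lra.
    + intros x y (Hx' & Hy' & _).
      assert (Hxy : (Cmod ((x, y) - (zx, zy)) < d0)%R).
      { eapply Rle_lt_trans; [apply Cmod_pair_sub_le|].
        assert (Rabs (x - zx) <= r)%R by (apply Rabs_le; lra).
        assert (Rabs (y - zy) <= r)%R by (apply Rabs_le; lra). lra. }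
      specialize (Hnear _ Hxy).
      pose proof (Cmod_sub_ge (g (x, y)) (g (zx, zy))). unfold M. lra.
  - assert (0 <= M)%R by (unfold M; pose proof (Cmod_ge_0 (g (zx, zy))); lra). nra.
Qed.

(** * Cauchy's integral formula *)

(* Instead of computing the integral (it is 2 pi i), each edge is seen to contribute to the
   imaginary part with a definite sign. *)
Lemma Im_rect_int_inv_sub_pos (x1 x2 y1 y2 zx zy : R) : (x1 < zx < x2)%R -> (y1 < zy < y2)%R ->
  (0 < Im (rect_int (fun w => / (w - (zx, zy)))%C x1 x2 y1 y2))%R.
Proof.
  intros Hx Hy. set (u := fun w => / (w - (zx, zy))).
  assert (Hu : forall x y, x <> zx \/ y <> zy -> ccont u (x, y)).
  { intros x y Hxy. apply ccont_of_cdiff, cdiff_inv_sub. intros E. injection E. tauto. }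
  assert (Hh : forall y t, y <> zy -> continuous (U := C_R_NormedModule) (fun s => u (s, y)) t)
    by (intros; apply continuous_hline, Hu; tauto).
  assert (Hv : forall x t, x <> zx -> continuous (U := C_R_NormedModule) (fun s => u (x, s)) t)
    by (intros; apply continuous_vline, Hu; tauto).
  assert (Hu_pair : forall a b, u (a, b) =
    (((a - zx) / ((a - zx) ^ 2 + (b - zy) ^ 2))%R, (- (b - zy) / ((a - zx) ^ 2 + (b - zy) ^ 2))%R))
    by reflexivity.
  unfold rect_int.
  replace (Im (cint (fun t => u (t, y1)) x1 x2 + Ci * cint (fun t => u (x2, t)) y1 y2
               - cint (fun t => u (t, y2)) x1 x2 - Ci * cint (fun t => u (x1, t)) y1 y2))
    with (Im (cint (fun t => u (t, y1)) x1 x2) + Re (cint (fun t => u (x2, t)) y1 y2)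
          - Im (cint (fun t => u (t, y2)) x1 x2) - Re (cint (fun t => u (x1, t)) y1 y2))%R
    by (simpl; ring).
  rewrite !Im_cint, !Re_cint by (apply ex_cint_continuous; [lra | intros; first [apply Hh | apply Hv]; lra]).
  assert (I1 : (0 < RInt (fun t => Im (u (t, y1))) x1 x2)%R).
  { apply RInt_gt_0; [lra | | intros t _; apply (continuous_Im (fun s => u (s, _))), Hh; lra].
    intros t _. rewrite Hu_pair. apply Rdiv_lt_0_compat; [lra | apply pow2_plus_pow2_pos; lra]. }
  assert (I2 : (0 < RInt (fun t => Re (u (x2, t))) y1 y2)%R).
  { apply RInt_gt_0; [lra | | intros t _; apply (continuous_Re (fun s => u (_, s))), Hv; lra].
    intros t _. rewrite Hu_pair, Rplus_comm. apply Rdiv_lt_0_compat; [lra | apply pow2_plus_pow2_pos; lra]. }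
  assert (I3 : (RInt (fun t => Im (u (t, y2))) x1 x2 < 0)%R).
  { apply RInt_lt_0; [lra | | intros t _; apply (continuous_Im (fun s => u (s, _))), Hh; lra].
    intros t _. rewrite Hu_pair. apply Rdiv_neg_pos; [lra | apply pow2_plus_pow2_pos; lra]. }
  assert (I4 : (RInt (fun t => Re (u (x1, t))) y1 y2 < 0)%R).
  { apply RInt_lt_0; [lra | | intros t _; apply (continuous_Re (fun s => u (_, s))), Hv; lra].
    intros t _. rewrite Hu_pair, Rplus_comm. apply Rdiv_neg_pos; [lra | apply pow2_plus_pow2_pos; lra]. }
  lra.
Qed.

Lemma ccont_difference_quotient (f : C -> C) (z l : C) : is_cderiv f z l ->
  ccont (fun w => if Ceq_dec w z then l else (f w - f z) * / (w - z)) z.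
Proof.
  intros Hl eps Heps. destruct (Hl (eps / 2)%R ltac:(lra)) as [d [Hd Hdd]].
  exists d. split; [exact Hd|]. intros w Hw.
  destruct (Ceq_dec z z) as [_ | Hzz]; [|contradiction].
  destruct (Ceq_dec w z) as [-> | Hwz].
  { unfold Cminus. rewrite Cplus_opp_r, Cmod_0. exact Heps. }
  assert (Hn : (0 < Cmod (w - z))%R) by (apply Cmod_sub_pos, Hwz).
  replace ((f w - f z) * / (w - z) - l) with ((f w - f z - l * (w - z)) * / (w - z))
    by (field; apply Cminus_neq_0, Hwz).
  rewrite Cmod_mult, Cmod_inv by (apply Cminus_neq_0, Hwz).
  specialize (Hdd w Hw).
  apply (Rmult_le_compat_r (/ Cmod (w - z))) in Hdd; [|left; apply Rinv_0_lt_compat, Hn].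
  rewrite Rmult_assoc, Rinv_r in Hdd by lra. lra.
Qed.

Theorem rect_int_cauchy_formula (f : C -> C) (x1 x2 y1 y2 zx zy : R) :
  (x1 < zx < x2)%R -> (y1 < zy < y2)%R ->
  (forall x y, (x1 <= x <= x2)%R -> (y1 <= y <= y2)%R -> cdiff f (x, y)) ->
  rect_int (fun w => f w * / (w - (zx, zy))) x1 x2 y1 y2
  = f (zx, zy) * rect_int (fun w => / (w - (zx, zy))) x1 x2 y1 y2.
Proof.
  intros Hx Hy Hf. set (z := (zx, zy)).
  destruct (Hf zx zy ltac:(lra) ltac:(lra)) as [l Hl]. fold z in Hl.
  set (q := fun w => if Ceq_dec w z then l else (f w - f z) * / (w - z)).
  assert (Hq : forall x y, (x1 <= x <= x2)%R -> (y1 <= y <= y2)%R -> (x, y) <> z -> cdiff q (x, y)).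
  { intros x y Hx' Hy' Hne.
    apply (cdiff_ext_loc (fun w => (f w - f z) * / (w - z)) q (x, y) (Cmod ((x, y) - z))).
    - apply Cmod_sub_pos, Hne.
    - intros w Hw. unfold q. destruct (Ceq_dec w z) as [-> | _]; [|reflexivity].
      rewrite Cmod_sub_comm in Hw. lra.
    - apply cdiff_mult; [apply cdiff_minus; [apply Hf; assumption | apply cdiff_const] | apply cdiff_inv_sub, Hne]. }
  assert (Hq0 : rect_int q x1 x2 y1 y2 = 0).
  { apply (goursat_except_point q x1 x2 y1 y2 zx zy); try assumption.
    intros x y Hx' Hy'. destruct (Ceq_dec (x, y) z) as [E | Hne].
    - rewrite E. apply ccont_difference_quotient, Hl.
    - apply ccont_of_cdiff, Hq; assumption. }
  assert (Hz : forall x y, on_boundary x1 x2 y1 y2 x y -> (x, y) <> z).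
  { intros x y (_ & _ & Hb) E. injection E as -> ->. lra. }
  rewrite (rect_int_ext q (fun w => f w * / (w - z) - f z * / (w - z))) in Hq0; try lra.
  - rewrite rect_int_minus, rect_int_scal in Hq0; try lra.
    + apply (f_equal (fun v => v + f z * rect_int (fun w => / (w - z)) x1 x2 y1 y2)) in Hq0.
      rewrite Cplus_0_l in Hq0. rewrite <- Hq0. ring.
    + intros x y Hb. apply ccont_of_cdiff, cdiff_inv_sub, Hz, Hb.
    + intros x y Hb. apply ccont_of_cdiff, cdiff_mult; [apply Hf; apply Hb | apply cdiff_inv_sub, Hz, Hb].
    + intros x y Hb. apply ccont_of_cdiff, cdiff_mult; [apply cdiff_const | apply cdiff_inv_sub, Hz, Hb].
  - intros x y Hb. unfold q. destruct (Ceq_dec (x, y) z) as [E | _]; [exfalso; apply (Hz x y Hb E)|]. ring.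
Qed.

(** * The identity theorem *)

Lemma Cmod_ge_on_square_boundary (a1 a2 s x y : R) :
  on_boundary (a1 - s) (a1 + s) (a2 - s) (a2 + s) x y -> (s <= Cmod ((x, y) - (a1, a2)))%R.
Proof.
  intros (Hx & Hy & Hb).
  pose proof (re_le_Cmod ((x, y) - (a1, a2))) as Hre.
  pose proof (Rabs_Im_le_Cmod ((x, y) - (a1, a2))) as Him.
  simpl in Hre, Him.
  destruct Hb as [-> | [-> | [-> | ->]]];
    [rewrite Rabs_left1 in Hre | rewrite Rabs_right in Hre | rewrite Rabs_left1 in Him | rewrite Rabs_right in Him];
    lra.
Qed.

Section LocalIdentity.

Variables (f : C -> C) (a1 a2 s r0 : R).
Local Notation a := (a1, a2).
Local Notation square_int g := (rect_int g (a1 - s) (a1 + s) (a2 - s) (a2 + s)).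
Hypothesis s_pos : (0 < s)%R.
Hypothesis r0_pos : (0 < r0)%R.
Hypothesis f_cdiff :
  forall x y, (a1 - s <= x <= a1 + s)%R -> (a2 - s <= y <= a2 + s)%R -> cdiff f (x, y).
Hypothesis f_vanishes_near : forall w, (Cmod (w - a) < r0)%R -> f w = 0.

Variables (zx zy : R).
Local Notation z := (zx, zy).
Local Notation c := (z - a).
Local Notation ua w := (/ (w - a)).
Local Notation uz w := (/ (w - z)).
Hypothesis z_inside : (Cmod (z - a) < s)%R.

Lemma square_boundary_far (x y : R) : on_boundary (a1 - s) (a1 + s) (a2 - s) (a2 + s) x y ->
  (s <= Cmod ((x, y) - a))%R /\ (s - Cmod c <= Cmod ((x, y) - z))%R.
Proof.
  intros Hb. pose proof (Cmod_ge_on_square_boundary a1 a2 s x y Hb) as Ha. split; [exact Ha|].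
  pose proof (Cmod_sub_ge ((x, y) - a) c) as H.
  replace ((x, y) - a - c) with ((x, y) - z) in H by ring. lra.
Qed.

Lemma square_boundary_avoids (x y : R) : on_boundary (a1 - s) (a1 + s) (a2 - s) (a2 + s) x y ->
  (x, y) <> a /\ (x, y) <> z.
Proof.
  intros Hb. destruct (square_boundary_far x y Hb) as [Ha Hz].
  pose proof z_inside.
  split; intros E; rewrite E in Ha, Hz; unfold Cminus in *; rewrite Cplus_opp_r, Cmod_0 in *; lra.
Qed.

Lemma in_square_of_boundary (x y : R) : on_boundary (a1 - s) (a1 + s) (a2 - s) (a2 + s) x y ->
  (a1 - s <= x <= a1 + s)%R /\ (a2 - s <= y <= a2 + s)%R.
Proof. intros (Hx & Hy & _). split; assumption. Qed.

Lemma ccont_moment_integrand (n : nat) :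
  ccont_on_boundary (fun w => f w * (c * ua w) ^ n * uz w) (a1 - s) (a1 + s) (a2 - s) (a2 + s).
Proof.
  intros x y Hb. destruct (square_boundary_avoids x y Hb) as [Ha Hz].
  destruct (in_square_of_boundary x y Hb) as [Hx Hy].
  apply ccont_of_cdiff, cdiff_mult; [apply cdiff_mult|].
  - apply f_cdiff; assumption.
  - apply cdiff_pow, cdiff_mult; [apply cdiff_const | apply cdiff_inv_sub, Ha].
  - apply cdiff_inv_sub, Hz.
Qed.

(* Consecutive moments differ by the integral of f (c / (w - a))^n / (w - a), which is
   holomorphic on the whole square because f vanishes near a. *)
Lemma moment_succ (n : nat) :
  square_int (fun w => f w * (c * ua w) ^ S n * uz w) = square_int (fun w => f w * (c * ua w) ^ n * uz w).
Proof.
  assert (Hgoursat : square_int (fun w => f w * (c * ua w) ^ n * ua w) = 0).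
  { apply goursat; try lra. intros x y Hx Hy.
    destruct (Rlt_le_dec (Cmod ((x, y) - a)) r0) as [Hnear | Hfar].
    - apply (cdiff_ext_loc (fun _ => 0) _ (x, y) (r0 - Cmod ((x, y) - a))); [lra | | apply cdiff_const].
      intros w Hw. rewrite f_vanishes_near; [ring|].
      pose proof (Cmod_triangle (w - (x, y)) ((x, y) - a)) as H.
      replace (w - (x, y) + ((x, y) - a)) with (w - a) in H by ring. lra.
    - assert (Ha : (x, y) <> a).
      { intros E. rewrite E in Hfar. unfold Cminus in Hfar. rewrite Cplus_opp_r, Cmod_0 in Hfar.
        lra. }
      apply cdiff_mult; [apply cdiff_mult|].
      + apply f_cdiff; assumption.
      + apply cdiff_pow, cdiff_mult; [apply cdiff_const | apply cdiff_inv_sub, Ha].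
      + apply cdiff_inv_sub, Ha. }
  assert (Hdiff : square_int (fun w => f w * (c * ua w) ^ n * uz w - f w * (c * ua w) ^ S n * uz w)
                  = square_int (fun w => f w * (c * ua w) ^ n * ua w)).
  { apply rect_int_ext; try lra. intros x y Hb. destruct (square_boundary_avoids x y Hb) as [Ha Hz].
    change ((c * ua (x, y)) ^ S n) with (c * ua (x, y) * (c * ua (x, y)) ^ n).
    field. split; apply Cminus_neq_0; assumption. }
  rewrite rect_int_minus, Hgoursat in Hdiff by (lra || apply ccont_moment_integrand).
  apply (f_equal (fun v => v + square_int (fun w => f w * (c * ua w) ^ S n * uz w))) in Hdiff.
  rewrite Cplus_0_l in Hdiff. rewrite <- Hdiff. ring.
Qed.

Lemma moment_geometric_bound : exists K, forall n,
  (Cmod (square_int (fun w => f w * (c * ua w) ^ n * uz w)%C) <= K * (Cmod c / s) ^ n)%R.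
Proof.
  set (rho := Cmod c). assert (Hrho : (0 <= rho < s)%R) by (split; [apply Cmod_ge_0 | exact z_inside]).
  destruct (ccont_on_boundary_bounded f (a1 - s) (a1 + s) (a2 - s) (a2 + s)) as [M HM]; try lra.
  { intros x y Hb. destruct (in_square_of_boundary x y Hb). apply ccont_of_cdiff, f_cdiff; assumption. }
  exists (8 * s * M / (s - rho))%R. intros n.
  replace (8 * s * M / (s - rho) * (rho / s) ^ n)%R
    with (2 * ((a1 + s - (a1 - s)) + (a2 + s - (a2 - s))) * (M * (rho / s) ^ n / (s - rho)))%R
    by (field; lra).
  apply Cmod_rect_int_le; try lra; [apply ccont_moment_integrand |].
  intros x y Hb. specialize (HM x y Hb).
  destruct (square_boundary_avoids x y Hb) as [Ha Hz]. destruct (square_boundary_far x y Hb) as [Hfa Hfz].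
  fold rho in Hfz.
  assert (Hq : (0 <= rho * / Cmod ((x, y) - a) <= rho / s)%R).
  { split; [apply Rmult_le_pos; [lra | left; apply Rinv_0_lt_compat; lra]|].
    apply Rmult_le_compat_l; [lra | apply Rinv_le_contravar; lra]. }
  rewrite !Cmod_mult, Cmod_pow, Cmod_mult, !Cmod_inv by (apply Cminus_neq_0; assumption).
  fold rho. unfold Rdiv at 2.
  pose proof (Cmod_ge_0 (f (x, y))).
  apply Rmult_le_compat; [| left; apply Rinv_0_lt_compat; lra | | apply Rinv_le_contravar; lra].
  - apply Rmult_le_pos; [lra | apply pow_le; lra].
  - apply Rmult_le_compat; [lra | apply pow_le; lra | exact HM | apply pow_incr; exact Hq].
Qed.

Lemma cauchy_integral_vanishes : square_int (fun w => f w * uz w) = 0.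
Proof.
  assert (Hmoments : forall n,
    square_int (fun w => f w * (c * ua w) ^ n * uz w) = square_int (fun w => f w * uz w)).
  { induction n as [|n IH].
    - apply rect_int_ext; try lra. intros x y _. simpl. ring.
    - rewrite moment_succ. exact IH. }
  destruct moment_geometric_bound as [K HK].
  apply (eq_0_of_Cmod_le_geometric _ K (Cmod c / s)).
  - pose proof (Cmod_ge_0 c). pose proof z_inside. split.
    + apply Rmult_le_pos; [lra | left; apply Rinv_0_lt_compat; lra].
    + apply Rmult_lt_reg_r with s; [lra|]. unfold Rdiv. rewrite Rmult_assoc, Rinv_l by lra. lra.
  - intros n. rewrite <- (Hmoments n). apply HK.
Qed.

Lemma local_identity : f z = 0.
Proof.
  assert (Hx : (a1 - s < zx < a1 + s)%R).
  { pose proof (re_le_Cmod c) as Hre. pose proof z_inside. simpl in Hre.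
    apply Rabs_lt_between'. unfold Rminus. lra. }
  assert (Hy : (a2 - s < zy < a2 + s)%R).
  { pose proof (Rabs_Im_le_Cmod c) as Him. pose proof z_inside. simpl in Him.
    apply Rabs_lt_between'. unfold Rminus. lra. }
  pose proof (rect_int_cauchy_formula f _ _ _ _ zx zy Hx Hy f_cdiff) as Hcauchy.
  rewrite cauchy_integral_vanishes in Hcauchy.
  pose proof (Im_rect_int_inv_sub_pos _ _ _ _ zx zy Hx Hy) as HW.
  destruct (Ceq_dec (f z) 0) as [| Hfz]; [assumption|].
  exfalso. apply (Cmult_neq_0 (f z) (rect_int (fun w => / (w - z)) (a1 - s) (a1 + s) (a2 - s) (a2 + s))).
  - exact Hfz.
  - intros E. rewrite E in HW. simpl in HW. lra.
  - symmetry. exact Hcauchy.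
Qed.

End LocalIdentity.

Lemma in_disc_square (p : C) (s x y : R) : (Cmod p + 2 * s < 1)%R ->
  (Re p - s <= x <= Re p + s)%R -> (Im p - s <= y <= Im p + s)%R -> in_disc (x, y).
Proof.
  intros Hps Hx Hy. unfold in_disc.
  pose proof (Cmod_triangle p ((x, y) - p)) as H.
  assert (E : p + ((x, y) - p) = (x, y)) by (apply injective_projections; simpl; ring).
  rewrite E in H.
  destruct p as [px py]. simpl in Hx, Hy.
  pose proof (Cmod_pair_sub_le x y px py).
  assert (Rabs (x - px) <= s)%R by (apply Rabs_le; lra).
  assert (Rabs (y - py) <= s)%R by (apply Rabs_le; lra).
  lra.
Qed.

Lemma vanishing_propagates (f : C -> C) (p q : C) (s r : R) :
  (forall z, in_disc z -> cdiff f z) -> (0 < s)%R -> (Cmod p + 2 * s < 1)%R -> (0 < r)%R ->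
  (forall w, (Cmod (w - p) < r)%R -> f w = 0) -> (Cmod (q - p) < s)%R ->
  exists r', (0 < r')%R /\ forall w, (Cmod (w - q) < r')%R -> f w = 0.
Proof.
  intros Hf Hs Hps Hr Hnear Hqp. exists (s - Cmod (q - p))%R. split; [lra|].
  intros [x y] Hw. destruct p as [px py].
  apply (local_identity f px py s r); try assumption.
  - intros x' y' Hx' Hy'. apply Hf, (in_disc_square (px, py) s); assumption.
  - pose proof (Cmod_triangle ((x, y) - q) (q - (px, py))) as H.
    replace ((x, y) - q + (q - (px, py))) with ((x, y) - (px, py)) in H by ring. lra.
Qed.

Lemma Cmod_segment_le (a w : C) (t mu : R) : (0 <= t <= 1)%R ->
  (Cmod a <= mu)%R -> (Cmod w <= mu)%R -> (Cmod (a + RtoC t * (w - a)) <= mu)%R.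
Proof.
  intros Ht Ha Hw.
  replace (a + RtoC t * (w - a)) with (RtoC (1 - t) * a + RtoC t * w)
    by (apply injective_projections; simpl; ring).
  eapply Rle_trans; [apply Cmod_triangle|].
  rewrite !Cmod_mult, !Cmod_R, !Rabs_right by lra. nra.
Qed.

Lemma exists_div_INR_lt (D s : R) : (0 <= D)%R -> (0 < s)%R -> exists K : nat, (0 < INR K)%R /\ (D / INR K < s)%R.
Proof.
  intros HD Hs. destruct (INR_unbounded (D / s)) as [K HK].
  assert (HDs : (0 <= D / s)%R) by (apply Rdiv_le_0_compat; lra).
  exists K. split; [lra|].
  apply (Rmult_lt_reg_r (INR K)); [lra|].
  replace (D / INR K * INR K)%R with D by (field; lra).
  apply (Rmult_lt_reg_l (/ s)); [apply Rinv_0_lt_compat, Hs|].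
  replace (/ s * (s * INR K))%R with (INR K) by (field; lra).
  rewrite Rmult_comm. exact HK.
Qed.

Lemma zero_on_disc_of_vanishing_near (f : C -> C) (a : C) (r : R) :
  (forall z, in_disc z -> cdiff f z) -> in_disc a -> (0 < r)%R ->
  (forall w, (Cmod (w - a) < r)%R -> f w = 0) -> zero_on_disc f.
Proof.
  intros Hf Ha Hr Hnear w Hw. unfold in_disc in Ha, Hw.
  set (mu := Rmax (Cmod a) (Cmod w)).
  assert (Hmu : (Cmod a <= mu /\ Cmod w <= mu /\ mu < 1)%R)
    by (unfold mu; repeat split; [apply Rmax_l | apply Rmax_r | apply Rmax_lub_lt; assumption]).
  set (s := ((1 - mu) / 3)%R).
  assert (Hs : (0 < s)%R) by (unfold s; lra).
  set (D := Cmod (w - a)).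
  assert (HD : (0 <= D)%R) by apply Cmod_ge_0.
  destruct (exists_div_INR_lt D s HD Hs) as [K [HKpos Hstep]].
  set (pt := fun k : nat => a + RtoC (INR k / INR K) * (w - a)).
  assert (Hpt : forall k, (k <= K)%nat -> (Cmod (pt k) + 2 * s < 1)%R).
  { intros k Hk. enough (Cmod (pt k) <= mu)%R by (unfold s; lra).
    apply Cmod_segment_le; try lra. split.
    - apply Rdiv_le_0_compat; [apply pos_INR | exact HKpos].
    - unfold Rdiv. rewrite <- (Rinv_r (INR K)) by lra.
      apply Rmult_le_compat_r; [left; apply Rinv_0_lt_compat, HKpos | apply le_INR, Hk]. }
  assert (Hdist : forall k, Cmod (pt (S k) - pt k) = (D / INR K)%R).
  { intros k. unfold pt. rewrite S_INR.
    replace (a + RtoC ((INR k + 1) / INR K) * (w - a) - (a + RtoC (INR k / INR K) * (w - a)))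
      with (RtoC (/ INR K) * (w - a)) by (apply injective_projections; simpl; field; lra).
    rewrite Cmod_mult, Cmod_R, Rabs_right by (left; apply Rinv_0_lt_compat, HKpos).
    unfold D, Rdiv. ring. }
  assert (Hchain : forall k, (k <= K)%nat -> exists rk, (0 < rk)%R /\ forall v, (Cmod (v - pt k) < rk)%R -> f v = 0).
  { induction k as [|k IH]; intros Hk.
    - exists r. split; [exact Hr|]. intros v Hv. apply Hnear.
      replace a with (pt 0%nat) by (apply injective_projections; unfold pt; simpl; field; lra). exact Hv.
    - destruct (IH ltac:(lia)) as [rk [Hrk Hvk]].
      apply (vanishing_propagates f (pt k) (pt (S k)) s rk Hf Hs (Hpt k ltac:(lia)) Hrk Hvk).
      rewrite Hdist. exact Hstep. }
  destruct (Hchain K (Nat.le_refl K)) as [rK [HrK HvK]].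
  apply HvK. replace (w - pt K) with (RtoC 0) by (apply injective_projections; unfold pt; simpl; field; lra).
  rewrite Cmod_0. exact HrK.
Qed.

Lemma zero_on_disc_of_mul_zero (f g : C -> C) (z0 : C) :
  (forall z, in_disc z -> cdiff f z) -> in_disc z0 -> ccont g z0 -> g z0 <> 0 ->
  (forall z, in_disc z -> g z * f z = 0) -> zero_on_disc f.
Proof.
  intros Hf Hz0 Hg Hgz0 Hgf. unfold in_disc in Hz0.
  destruct (Hg (Cmod (g z0)) (proj1 (Cmod_gt_0 _) Hgz0)) as [d [Hd Hnear]].
  apply (zero_on_disc_of_vanishing_near f z0 (Rmin d (1 - Cmod z0))); try assumption.
  { apply Rmin_pos; lra. }
  intros w Hw.
  assert (Hwd : (Cmod (w - z0) < d)%R) by (eapply Rlt_le_trans; [exact Hw | apply Rmin_l]).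
  assert (Hw1 : in_disc w).
  { unfold in_disc. pose proof (Cmod_triangle (w - z0) z0) as H.
    replace (w - z0 + z0) with w in H by ring.
    assert (Cmod (w - z0) < 1 - Cmod z0)%R by (eapply Rlt_le_trans; [exact Hw | apply Rmin_r]). lra. }
  assert (Hgw : g w <> 0).
  { intros E. specialize (Hnear w Hwd). rewrite E in Hnear.
    replace (0 - g z0) with (- g z0) in Hnear by ring. rewrite Cmod_opp in Hnear. lra. }
  specialize (Hgf w Hw1).
  replace (f w) with (/ g w * (g w * f w)) by (field; exact Hgw).
  rewrite Hgf. ring.
Qed.

(** * Weighted composition operators *)

Lemma Cmod_root_of_unity (beta : C) (N : nat) : (1 <= N)%nat -> beta ^ N = 1 -> Cmod beta = 1%R.
Proof.
  intros HN Hb.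
  assert (E : (Cmod beta ^ N = 1)%R) by (rewrite <- Cmod_pow, Hb; apply Cmod_1).
  pose proof (Cmod_ge_0 beta).
  destruct (Rtotal_order (Cmod beta) 1) as [H1 | [H1 | H1]]; [| exact H1 |].
  - assert (Cmod beta ^ N < 1)%R by (apply pow_lt_1_compat; [lra | lia]). lra.
  - assert (1 < Cmod beta ^ N)%R by (apply Rlt_pow_R1; [lra | lia]). lra.
Qed.

Lemma in_disc_scale (c z : C) : Cmod c = 1%R -> in_disc z -> in_disc (c * z).
Proof. unfold in_disc. intros Hc. rewrite Cmod_mult, Hc, Rmult_1_l. tauto. Qed.

Lemma in_disc_rotate (beta : C) (n : nat) (z : C) : Cmod beta = 1%R -> in_disc z -> in_disc (beta ^ n * z).
Proof. intros Hb. apply in_disc_scale. rewrite Cmod_pow, Hb. apply pow1. Qed.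

Fixpoint orbit_prod (m : C -> C) (beta : C) (n : nat) (z : C) : C :=
  match n with
  | O => 1
  | S n => orbit_prod m beta n z * m (beta ^ n * z)
  end.

Section WeightedComposition.

Variables (m : C -> C) (beta : C).
Hypothesis beta_unimodular : Cmod beta = 1%R.

Lemma orbit_prod_root (n : nat) (z0 : C) : m z0 = 0 -> orbit_prod m beta (S n) z0 = 0.
Proof.
  intros Hz0. induction n as [|n IH]; simpl in *.
  - rewrite !Cmult_1_l. exact Hz0.
  - rewrite IH. ring.
Qed.

Lemma cdiff_orbit_prod (n : nat) (z : C) : (forall w, in_disc w -> cdiff m w) -> in_disc z ->
  cdiff (orbit_prod m beta n) z.
Proof.
  intros Hm Hz. induction n as [|n IH]; simpl.
  - apply cdiff_const.
  - apply cdiff_mult; [exact IH|]. apply cdiff_comp_scale, Hm, in_disc_rotate; assumption.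
Qed.

Lemma eigenvector_iterate (lambda : C) (f : C -> C) :
  zero_on_disc (fun z => lambda * f z - Top m beta f z) ->
  forall n z, in_disc z -> lambda ^ n * f z = orbit_prod m beta n z * f (beta ^ n * z).
Proof.
  intros Heigen n. induction n as [|n IH]; intros z Hz; simpl.
  - rewrite !Cmult_1_l. reflexivity.
  - specialize (Heigen (beta ^ n * z) (in_disc_rotate beta n z beta_unimodular Hz)). unfold Top in Heigen.
    replace (lambda * lambda ^ n * f z) with (lambda * (lambda ^ n * f z)) by ring.
    rewrite IH by exact Hz.
    replace (beta * beta ^ n * z) with (beta * (beta ^ n * z)) by ring.
    apply Cminus_eq_0 in Heigen.
    replace (lambda * (orbit_prod m beta n z * f (beta ^ n * z)))
      with (orbit_prod m beta n z * (lambda * f (beta ^ n * z))) by ring.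
    rewrite Heigen. ring.
Qed.

Hypothesis m_cdiff : forall z, in_disc z -> cdiff m z.
Variable f : C -> C.
Hypothesis f_cdiff : forall z, in_disc z -> cdiff f z.

Lemma zero_on_disc_of_Top_zero : ~ zero_on_disc m -> zero_on_disc (Top m beta f) -> zero_on_disc f.
Proof.
  intros Hm_nz HTf.
  destruct (not_all_ex_not _ _ Hm_nz) as [w Hw]. apply imply_to_and in Hw. destruct Hw as [Hw Hmw].
  assert (Hfrot : zero_on_disc (fun z => f (beta * z))).
  { apply (zero_on_disc_of_mul_zero _ m w); try assumption.
    - intros z Hz. apply cdiff_comp_scale, f_cdiff, in_disc_scale; assumption.
    - apply ccont_of_cdiff, m_cdiff, Hw. }
  assert (Hb0 : beta <> 0) by (intros E; rewrite E, Cmod_0 in beta_unimodular; lra).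
  intros z Hz. replace z with (beta * (/ beta * z)) by (field; exact Hb0).
  apply Hfrot, in_disc_scale; [|exact Hz].
  rewrite Cmod_inv, beta_unimodular by exact Hb0. apply Rinv_1.
Qed.

Lemma zero_on_disc_of_eigenvector_weight_zero (lambda : C) (N : nat) (z0 : C) :
  lambda <> 0 -> beta ^ N = 1 -> (1 <= N)%nat -> in_disc z0 -> m z0 = 0 ->
  zero_on_disc (fun z => lambda * f z - Top m beta f z) -> zero_on_disc f.
Proof.
  intros Hlambda Hbeta HN Hz0 Hmz0 Heigen.
  apply (zero_on_disc_of_mul_zero f (fun z => lambda ^ N - orbit_prod m beta N z) z0); try assumption.
  - apply ccont_of_cdiff, cdiff_minus; [apply cdiff_const | apply cdiff_orbit_prod; assumption].
  - destruct N as [|N]; [lia|]. rewrite orbit_prod_root by exact Hmz0.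
    replace (lambda ^ S N - 0) with (lambda ^ S N) by ring. apply Cpow_nz, Hlambda.
  - intros z Hz. pose proof (eigenvector_iterate lambda f Heigen N z Hz) as H.
    rewrite Hbeta, Cmult_1_l in H.
    replace ((lambda ^ N - orbit_prod m beta N z) * f z) with (lambda ^ N * f z - orbit_prod m beta N z * f z)
      by ring.
    rewrite H. ring.
Qed.

End WeightedComposition.

Theorem proposition3p3 (beta : C) (N : nat) (m : C -> C) :
  (2 <= N)%nat ->
  beta ^ N = 1 ->
  (forall k : nat, (1 <= k <= N - 1)%nat -> beta ^ k <> 1) ->
  holomorphic_on_disc m ->
  ~ zero_on_disc m ->
  (exists z0 : C, in_disc z0 /\ m z0 = 0) ->
  forall lambda : C, ~ in_point_spectrum m beta lambda.
Proof.
  intros HN Hbeta _ Hm Hm_nz [z0 [Hz0 Hmz0]] lambda [f [Hf [Hf_nz Heigen]]].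
  apply Hf_nz.
  assert (Hb : Cmod beta = 1%R) by (apply (Cmod_root_of_unity beta N); [lia | exact Hbeta]).
  assert (Hmd : forall z, in_disc z -> cdiff m z) by (intros; apply holomorphic_on_disc_cdiff; assumption).
  assert (Hfd : forall z, in_disc z -> cdiff f z) by (intros; apply holomorphic_on_disc_cdiff; assumption).
  destruct (Ceq_dec lambda 0) as [-> | Hlambda].
  - apply (zero_on_disc_of_Top_zero m beta Hb Hmd f Hfd Hm_nz).
    intros z Hz. specialize (Heigen z Hz).
    replace (Top m beta f z) with (- (0 * f z - Top m beta f z)) by ring. rewrite Heigen. ring.
  - apply (zero_on_disc_of_eigenvector_weight_zero m beta Hb Hmd f Hfd lambda N z0);
      (assumption || lia).
Qed.
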